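(* Let $n\ge3$. There is no weight-preserving bijection $\Phi$ from the set of arrowed monotone triangles with bottom row $(1,\dots,n)$ to the set of SBCSPPs of order $n$ such that the map sending each DPP-SBCSPP $D$ to the monotone triangle obtained from $\Phi^{-1}(D)$ by forgetting all decorations is a bijection from the set of DPP-SBCSPPs of order $n$ onto the set of monotone triangles with bottom row $(1,\dots,n)$.
   Context: A monotone triangle with $n$ rows is an array $(m_{i,j})_{1\le j\le i\le n}$ of integers with $m_{i+1,j}\le m_{i,j}\le m_{i+1,j+1}$, $m_{i,j}<m_{i,j+1}$; row $n$ is the bottom row; northwest/northeast-neighbours of $m_{i,j}$ are $m_{i-1,j-1}$, $m_{i-1,j}$. An arrowed monotone triangle decorates each entry by one of $\nwarrow,\nearrow,\nwarrow\!\nearrow$ with: an entry equal to its northwest-neighbour carries $\nearrow$; an entry equal to its northeast-neighbour carries $\nwarrow$. Weight: $u^{\#\nearrow}v^{\#\nwarrow}w^{\#\nwarrow\nearrow}\prod_i X_i^{(\text{sum of row } i)-(\text{sum of row } i-1)+(\#\nearrow\text{ in row }i)-(\#\nwarrow\text{ in row }i)}$. A near-balanced partition $(a_1,\dots,a_l\mid b_1,\dots,b_l)$ (Frobenius notation) has $a_i\in\{b_i,b_i+1\}$; $\mathrm{W}(\lambda)=w^{l+\sum(b_i-a_i)}$. An SBCSPP of order $n$ is a filling of a near-balanced shape with nonempty subsets of $\{1,\dots,n\}$, singletons strictly above the diagonal, row maxima weakly decreasing left to right, and columns strictly decreasing (all elements of an upper cell exceed all elements of the cell below). Weight: $\mathrm{W}(\lambda)\,u^{\#\text{cells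 strictly above diagonal}}\,v^{\binom{n+1}{2}-\#\text{entries on/below diagonal}}\,w^{\#\text{entries}-\#\text{cells}}\prod_iX_i^{\#\,i\text{'s}}$. A DPP-SBCSPP is an SBCSPP in which every cell is a singleton, the shape satisfies $a_i=b_i+1$ for all $i$, below each diagonal entry $d$ the entries in its column are $d-1,d-2,\dots,1$ (so that column has exactly $d-1$ cells below the diagonal), and no $1$ appears strictly above the diagonal. A bijection is weight-preserving if it maps each object to one of the same weight. *)

From mathcomp Require Import all_boot all_order all_algebra.
Set Implicit Arguments. Unset Strict Implicit. Unset Printing Implicit Defensive.
Import GRing.Theory Num.Theory.

(* A weight is a Laurent monomial
     u^eu v^ev w^ew X_1^e_1 ... X_n^e_n
   represented by its exponent vector; two weights are equal iff the
   monomials are equal.  [exp_X] is the list (e_1, ..., e_n).          *)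
Record monomial := Monomial {
  exp_u : int; exp_v : int; exp_w : int; exp_X : seq int }.

(* Monotone triangles: a list of rows (top row first); row i (0-indexed)
   has length i+1.  Entry m_{i+1,j+1} of the paper is [mt_entry t i j].   *)
Definition MT := seq (seq nat).

Definition mt_entry (t : MT) (i j : nat) : nat := nth 0 (nth [::] t i) j.

Definition is_MT (n : nat) (t : MT) : Prop :=
  [/\ size t = n,
      (forall i, i < n -> size (nth [::] t i) = i.+1),
      nth [::] t n.-1 = iota 1 n,
      (forall i j, i.+1 < n -> j <= i ->
          mt_entry t i.+1 j <= mt_entry t i j /\ mt_entry t i j <= mt_entry t i.+1 j.+1)
    & (forall i j, i < n -> j < i -> mt_entry t i j < mt_entry t i j.+1)].

(* Arrow decorations: AN = north-west arrow, AE = north-east arrow,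
   ANE = both arrows. *)
Inductive arrow := ANW | ANE | ABoth.

Definition isNW (a : arrow) : bool := if a is ANW then true else false.
Definition isNE (a : arrow) : bool := if a is ANE then true else false.
Definition isBoth (a : arrow) : bool := if a is ABoth then true else false.

Definition AMT := seq (seq (nat * arrow)).

Definition forget (T : AMT) : MT := map (map fst) T.

Definition amt_arrow (T : AMT) (i j : nat) : arrow := (nth (0, ANW) (nth [::] T i) j).2.

(* Entry (i,j) (0-indexed) has north-west neighbour (i-1,j-1) and
   north-east neighbour (i-1,j). *)
Definition is_AMT (n : nat) (T : AMT) : Prop :=
  is_MT n (forget T) /\
  (forall i j, 0 < i < n -> j <= i ->
     (0 < j -> mt_entry (forget T) i j = mt_entry (forget T) i.-1 j.-1 ->
        amt_arrow T i j = ANE) /\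
     (j < i -> mt_entry (forget T) i j = mt_entry (forget T) i.-1 j ->
        amt_arrow T i j = ANW)).

(* row i, 1-indexed; row 0 is empty *)
Definition row1 (A : Type) (s : seq (seq A)) (i : nat) : seq A :=
  if i is k.+1 then nth [::] s k else [::].

Definition rowsum (r : seq (nat * arrow)) : nat := sumn (map fst r).

Definition count_arrow (p : arrow -> bool) (T : AMT) : nat :=
  sumn (map (fun r => count (fun e => p e.2) r) T).

Definition amt_expX (T : AMT) (i : nat) : int :=
  ((rowsum (row1 T i))%:Z - (rowsum (row1 T i.-1))%:Z
  + (count (fun e => isNE e.2) (row1 T i))%:Z
  - (count (fun e => isNW e.2) (row1 T i))%:Z)%R.

Definition amt_weight (n : nat) (T : AMT) : monomial :=
  Monomial (count_arrow isNE T)%:Z (count_arrow isNW T)%:Z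
           (count_arrow isBoth T)%:Z
           [seq amt_expX T i | i <- iota 1 n].

(* Fillings of partition shapes: a list of rows (top first), each row a
   list of cells, each cell a subset of {1..n} represented canonically by
   its strictly increasing list of elements.  Cell (i,j) is 0-indexed
   (row i, column j); the shape is lambda = map size F.                   *)
Definition SBC := seq (seq (seq nat)).

Definition shape (F : SBC) : seq nat := map size F.

Definition cell (F : SBC) (i j : nat) : seq nat := nth [::] (nth [::] F i) j.

Definition in_shape (F : SBC) (i j : nat) : bool :=
  (i < size F) && (j < size (nth [::] F i)).

Definition is_partition (l : seq nat) : Prop :=
  (forall i, i < size l -> 0 < nth 0 l i) /\ sorted geq l.

(* Frobenius coordinates (a_1..a_d | b_1..b_d), here 0-indexed:
   d = Durfee size, a k = lambda_{k+1} - (k+1), b k = lambda'_{k+1} - (k+1). *)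
Definition durfee (l : seq nat) : nat := count (fun i => i < nth 0 l i) (iota 0 (size l)).
Definition conjpart (l : seq nat) (j : nat) : nat := count (fun r => j < r) l.
Definition frob_a (l : seq nat) (k : nat) : nat := nth 0 l k - k.+1.
Definition frob_b (l : seq nat) (k : nat) : nat := conjpart l k - k.+1.

Definition near_balanced (l : seq nat) : Prop :=
  is_partition l /\
  forall k, k < durfee l -> frob_a l k = frob_b l k \/ frob_a l k = (frob_b l k).+1.

Definition is_SBC (n : nat) (F : SBC) : Prop :=
  [/\ near_balanced (shape F),
      (forall i j, in_shape F i j ->
         [/\ cell F i j != [::], sorted ltn (cell F i j)
           & all (fun x => 0 < x <= n) (cell F i j)]),
      (forall i j, in_shape F i j -> i < j -> size (cell F i j) = 1),
      (forall i j, in_shape F i j.+1 ->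
         \max_(x <- cell F i j.+1) x <= \max_(x <- cell F i j) x)
    &
      (forall i j x y, in_shape F i.+1 j -> x \in cell F i j ->
         y \in cell F i.+1 j -> y < x)].

Definition W_exp (l : seq nat) : int :=
  ((durfee l)%:Z + \sum_(k < durfee l) ((frob_b l k)%:Z - (frob_a l k)%:Z))%R.

Definition cells_above (F : SBC) : nat :=
  \sum_(i < size F) \sum_(j < size (nth [::] F i) | i < j) 1.
Definition entries_onbelow (F : SBC) : nat :=
  \sum_(i < size F) \sum_(j < size (nth [::] F i) | j <= i) size (cell F i j).
Definition n_entries (F : SBC) : nat :=
  \sum_(i < size F) \sum_(j < size (nth [::] F i)) size (cell F i j).
Definition n_cells (F : SBC) : nat := sumn (shape F).
Definition count_val (F : SBC) (v : nat) : nat :=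
  \sum_(i < size F) \sum_(j < size (nth [::] F i)) count_mem v (cell F i j).

Definition sbc_weight (n : nat) (F : SBC) : monomial :=
  Monomial (cells_above F)%:Z
           ('C(n.+1, 2)%:Z - (entries_onbelow F)%:Z)%R
           (W_exp (shape F) + (n_entries F)%:Z - (n_cells F)%:Z)%R
           [seq ((count_val F i)%:Z)%R | i <- iota 1 n].

Definition is_DPP (n : nat) (F : SBC) : Prop :=
  [/\ is_SBC n F,
      (forall i j, in_shape F i j -> size (cell F i j) = 1),
      (forall k, k < durfee (shape F) -> frob_a (shape F) k = (frob_b (shape F) k).+1),
      (forall k, k < durfee (shape F) -> exists d, forall t,
          (in_shape F (k + t) k <-> t < d) /\
          (t < d -> cell F (k + t) k = [:: d - t]))
    & (forall i j, in_shape F i j -> i < j -> 1 \notin cell F i j)].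

Definition bij_on (A B : Type) (P : A -> Prop) (Q : B -> Prop) (f : A -> B) : Prop :=
  [/\ (forall x, P x -> Q (f x)),
      (forall x y, P x -> P y -> f x = f y -> x = y)
    & (forall y, Q y -> exists x, P x /\ f x = y)].

From Pilot Require Import Defs.
From mathcomp Require Import all_boot all_order all_algebra.
From mathcomp Require Import zify.
Set Implicit Arguments. Unset Strict Implicit. Unset Printing Implicit Defensive.
Import GRing.Theory.

(* Let M* be the monotone triangle with rows (1), (1,3), (1,2,3), ..., (1..n).
   If Phi existed, some DPP-SBCSPP D would satisfy forget (Phi^-1 D) = M*, and
   T := Phi^-1 D would have the weight of D.
   - Arrowed side: an entry of M* equal to its north-east neighbour must carry
     a north-west arrow.  Counting these forced arrows row by row bounds the
     X-exponents of T: if T has no double arrow then X_1 is 0 or 2, X_2 >= 1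
     and X_v <= 2 + [v = 2] + [v = 3]; we call this the star profile.
   - Plane partition side: a DPP-SBCSPP has w-exponent 0, so T has no double
     arrow; and no DPP-SBCSPP has the star profile.  Its first column reads
     d, ..., 1; the second 1 forces the cell (1,1); the conditions a_k = b_k + 1
     then force at least 2d + 3 cells, whereas all entries lie in 1..d, where
     the profile allows at most 2d + 2 of them. *)

Definition star_row (i : nat) : seq nat :=
  if i is 0 then [:: 1] else if i is 1 then [:: 1; 3] else iota 1 i.+1.

Definition star_MT (n : nat) : MT := map star_row (iota 0 n).

Lemma size_star_row i : size (star_row i) = i.+1.
Proof. by case: i => [|[|i]] //=; rewrite size_iota. Qed.

Lemma star_row_entry i j : 2 <= i -> j <= i -> nth 0 (star_row i) j = j.+1.
Proof. by case: i => [|[|i]] // _ Hj; rewrite /star_row nth_iota //; lia. Qed.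

Lemma nth_star_MT n i : i < n -> nth [::] (star_MT n) i = star_row i.
Proof. by move=> Hi; rewrite (nth_map 0) ?size_iota // nth_iota. Qed.

Lemma star_MT_entry n i j : i < n -> mt_entry (star_MT n) i j = nth 0 (star_row i) j.
Proof. by move=> Hi; rewrite /mt_entry nth_star_MT. Qed.

Lemma is_MT_star n : 3 <= n -> is_MT n (star_MT n).
Proof.
move=> Hn; split.
- by rewrite size_map size_iota.
- by move=> i Hi; rewrite nth_star_MT // size_star_row.
- by rewrite nth_star_MT; case: n Hn => [|[|[|n]]].
- move=> i j Hi Hj; rewrite !star_MT_entry; try lia.
  case: i Hi Hj => [|[|i]] Hi Hj; first by case: j Hj.
  + by case: j Hj => [|[|j]].
  + by rewrite !star_row_entry //; lia.
- move=> i j Hi Hj; rewrite !star_MT_entry //.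
  case: i Hi Hj => [|[|i]] Hi Hj //; first by case: j Hj.
  by rewrite !star_row_entry //; lia.
Qed.

Lemma sumn_star_row_succ i : 2 <= i -> sumn (star_row i.+1) = sumn (star_row i) + i.+2.
Proof.
case: i => [|[|i]] // _; rewrite /star_row.
by rewrite -[i.+4]addn1 iotaD sumn_cat /=; lia.
Qed.

Definition net_arrows (r : seq (nat * arrow)) : int :=
  ((count (fun e => isNE e.2) r)%:Z - (count (fun e => isNW e.2) r)%:Z)%R.

Lemma count_NE_NW (r : seq (nat * arrow)) :
  count (fun e => isNE e.2) r + count (fun e => isNW e.2) r <= size r.
Proof. by elim: r => //= [[x a] r IH]; case: a => /=; lia. Qed.

Lemma net_arrows_ge (r : seq (nat * arrow)) : (- (size r)%:Z <= net_arrows r)%R.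
Proof. by have := count_NE_NW r; rewrite /net_arrows; lia. Qed.

Lemma net_arrows_le (r : seq (nat * arrow)) k : k <= size r ->
  (forall j, j < k -> (nth (0, ANW) r j).2 = ANW) ->
  (net_arrows r <= (size r)%:Z - 2 * k%:Z)%R.
Proof.
move=> Hk Hpref.
have Hnw : k <= count (fun e => isNW e.2) r.
  have Hall : all (fun e => isNW e.2) (take k r).
    apply/(all_nthP (0, ANW)) => j; rewrite size_takel // => Hj.
    by rewrite nth_take // Hpref.
  move: Hall; rewrite all_count => /eqP Htake.
  by rewrite -(cat_take_drop k r) count_cat Htake size_takel // leq_addr.
by have := count_NE_NW r; rewrite /net_arrows; lia.
Qed.

Section ArrowedRows.
Variables (n : nat) (T : AMT).
Hypothesis HT : is_AMT n T.

Lemma amt_size : size T = n.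
Proof. by case: HT => [[<- _ _ _ _] _]; rewrite size_map. Qed.

Lemma amt_row_values i : i < n -> map fst (nth [::] T i) = nth [::] (forget T) i.
Proof. by move=> Hi; rewrite (nth_map [::]) ?amt_size. Qed.

Lemma amt_row_size i : i < n -> size (nth [::] T i) = i.+1.
Proof.
by case: HT => [[_ Hs _ _ _] _] Hi; rewrite -(size_map fst) amt_row_values ?Hs.
Qed.

Lemma amt_expX_succ i : 0 < i < n ->
  amt_expX T i.+1 = ((sumn (nth [::] (forget T) i))%:Z
     - (sumn (nth [::] (forget T) i.-1))%:Z + net_arrows (nth [::] T i))%R.
Proof.
case: i => [|i] Hi //; rewrite /amt_expX /= /rowsum !amt_row_values; try lia.
by rewrite /net_arrows; lia.
Qed.

Lemma amt_entry_NW i j : 0 < i < n -> j < i ->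
  mt_entry (forget T) i j = mt_entry (forget T) i.-1 j -> amt_arrow T i j = ANW.
Proof. by move=> Hi Hj; apply: ((proj2 HT) i j Hi (ltnW Hj)).2. Qed.

Lemma amt_expX_top : 0 < n -> count_arrow isBoth T = 0 ->
  amt_expX T 1 = ((mt_entry (forget T) 0 0)%:Z + 1)%R \/
  amt_expX T 1 = ((mt_entry (forget T) 0 0)%:Z - 1)%R.
Proof.
move=> Hn; have := amt_row_size Hn; have := amt_size.
rewrite /count_arrow /mt_entry /amt_expX /=.
case: T => [|r rs] /=; first lia.
move=> _; case: r => [|[m a] [|]] //= _.
by case: a => /=; rewrite /rowsum /=; lia.
Qed.

End ArrowedRows.

Definition star_profile (n : nat) (e : nat -> int) : Prop :=
  [/\ e 1 = 0%R \/ e 1 = 2%R, (1 <= e 2)%R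
    & forall v, 0 < v <= n -> (e v <= (2 + (v == 2) + (v == 3))%N%:Z)%R].

Section StarTriangle.
Variables (n : nat) (T : AMT).
Hypotheses (Hn : 3 <= n) (HT : is_AMT n T) (HF : forget T = star_MT n).

Lemma star_expX_succ i : 0 < i < n ->
  amt_expX T i.+1 = ((sumn (star_row i))%:Z - (sumn (star_row i.-1))%:Z
                     + net_arrows (nth [::] T i))%R.
Proof. by move=> Hi; rewrite (amt_expX_succ HT Hi) HF !nth_star_MT //; lia. Qed.

(* Row i of M* agreeing with row i-1 on its first k entries forces k arrows. *)
Lemma star_expX_le i k : 0 < i < n -> k <= i ->
  (forall j, j < k -> nth 0 (star_row i) j = nth 0 (star_row i.-1) j) ->
  (amt_expX T i.+1 <= (sumn (star_row i))%:Z - (sumn (star_row i.-1))%:Z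
                      + i.+1%:Z - 2 * k%:Z)%R.
Proof.
move=> Hi Hk Hagree; rewrite star_expX_succ //.
have Hnet : (net_arrows (nth [::] T i) <= i.+1%:Z - 2 * k%:Z)%R.
  rewrite -(amt_row_size HT (i := i)); last lia.
  apply: net_arrows_le; first by rewrite (amt_row_size HT); lia.
  move=> j Hj; apply: (amt_entry_NW HT Hi); first lia.
  by rewrite HF !star_MT_entry ?Hagree //; lia.
lia.
Qed.

(* Rows 2 and 3 have one forced arrow, every later row all but its last entry. *)
Lemma amt_star_profile : count_arrow isBoth T = 0 -> star_profile n (amt_expX T).
Proof.
move=> Hboth; have Htop := amt_expX_top HT (ltnW (ltnW Hn)) Hboth.
rewrite HF star_MT_entry /= in Htop; last lia.
split.
- lia.
- have := net_arrows_ge (nth [::] T 1).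
  rewrite (star_expX_succ (i := 1)) ?(amt_row_size HT (i := 1)) /=; lia.
- case=> [|[|[|[|v]]]] // Hv.
  + lia.
  + have := @star_expX_le 1 1 ltac:(lia) (leqnn _) ltac:(by case); rewrite /=; lia.
  + have := @star_expX_le 2 1 ltac:(lia) ltac:(lia) ltac:(by case); rewrite /=; lia.
  + have Hagree j : j < v.+3 -> nth 0 (star_row v.+3) j = nth 0 (star_row v.+2) j.
      by move=> Hj; rewrite !star_row_entry //; lia.
    have := @star_expX_le v.+3 v.+3 ltac:(lia) (leqnn _) Hagree.
    by rewrite (sumn_star_row_succ (i := v.+2)) //=; lia.
Qed.

End StarTriangle.

Lemma size_le_sumn (s : seq nat) : all (fun x => 0 < x) s -> size s <= sumn s.
Proof. by elim: s => //= x s IH /andP [Hx /IH]; lia. Qed.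

Lemma sum_le_const (s : seq nat) (f : nat -> nat) c :
  (forall v, v \in s -> f v <= c) -> \sum_(v <- s) f v <= c * size s.
Proof.
move=> Hf; rewrite -sum1_size big_distrr /= big_seq [X in _ <= X]big_seq.
by apply: leq_sum => v /Hf; rewrite muln1.
Qed.

Section PartitionShape.
Variable F : SBC.
Hypothesis HP : is_partition (Defs.shape F).

Lemma nth_shape i : i < size F -> nth 0 (Defs.shape F) i = size (nth [::] F i).
Proof. by move=> Hi; rewrite /Defs.shape (nth_map [::]). Qed.

Lemma rows_pos : all (fun x => 0 < x) (Defs.shape F).
Proof. by apply/(all_nthP 0) => i; apply: HP.1. Qed.

Lemma row_pos i : i < size F -> 0 < size (nth [::] F i).
Proof. by move=> Hi; rewrite -nth_shape //; apply: HP.1; rewrite size_map. Qed.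

Lemma row_mono i i' : i <= i' -> i' < size F ->
  size (nth [::] F i') <= size (nth [::] F i).
Proof.
move=> Hii' Hi'; rewrite -!nth_shape //; last by lia.
have Hgeq : transitive geq by move=> a b c /= H1 H2; apply: leq_trans H2 H1.
apply: (@sorted_leq_nth _ geq Hgeq (@leqnn) 0 _ HP.2); rewrite // inE size_map; lia.
Qed.

Lemma in_shape_mono i j i' j' : in_shape F i j -> i' <= i -> j' <= j -> in_shape F i' j'.
Proof.
move=> /andP [Hi Hj] Hii' Hjj'; apply/andP; split; first by lia.
by have := row_mono Hii' Hi; lia.
Qed.

Lemma in_shape_col0 i : in_shape F i 0 = (i < size F).
Proof. by rewrite /in_shape; case: ltnP => //= Hi; apply: row_pos. Qed.

Lemma durfee_gt k : in_shape F k k -> k < durfee (Defs.shape F).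
Proof.
move=> /andP [Hk Hkk]; rewrite /durfee size_map.
rewrite -(subnKC Hk) iotaD count_cat.
have -> : count (fun i => i < nth 0 (Defs.shape F) i) (iota 0 k.+1) = k.+1.
  apply/eqP; rewrite -[X in _ == X](size_iota 0 k.+1) -all_count.
  apply/allP => i; rewrite mem_iota => /andP [_ Hi]; rewrite nth_shape; last by lia.
  by have := @row_mono i k ltac:(lia) Hk; lia.
exact: ltn_addr.
Qed.

Lemma conjpart0 : conjpart (Defs.shape F) 0 = size F.
Proof. by rewrite /conjpart -(size_map size F); apply/eqP; rewrite -all_count rows_pos. Qed.

Lemma n_cells_ge : 3 <= size F ->
  size (nth [::] F 0) + size (nth [::] F 1) + size (nth [::] F 2) + (size F - 3) <= n_cells F.
Proof.
have := rows_pos; rewrite /n_cells /Defs.shape.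
case: F => [|r0 [|r1 [|r2 rs]]] //= /and4P [_ _ _ Hrs] _.
by have := size_le_sumn Hrs; rewrite size_map; lia.
Qed.

End PartitionShape.

Lemma count_val_ge F v i j : in_shape F i j -> count_mem v (cell F i j) <= count_val F v.
Proof.
move=> /andP [Hi Hj]; rewrite /count_val (bigD1 (Ordinal Hi)) //=.
by rewrite (bigD1 (Ordinal Hj)) //= -addnA leq_addr.
Qed.

Lemma sum_ord_indicator s a : \sum_(i < s) (i == a :> nat) = (a < s).
Proof.
elim: s => [|s IH]; first by rewrite big_ord0.
by rewrite big_ord_recr /= IH; case: (ltngtP a s) => H; lia.
Qed.

Lemma count_val_le1 F v a b :
  (forall i j, in_shape F i j -> count_mem v (cell F i j) <= (i == a) * (j == b)) ->
  count_val F v <= 1.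
Proof.
move=> Hab; rewrite /count_val.
apply: (@leq_trans (\sum_(i < size F) (i == a :> nat))); last by rewrite sum_ord_indicator; lia.
apply: leq_sum => i _.
apply: (@leq_trans (\sum_(j < size (nth [::] F i)) (i == a :> nat) * (j == b :> nat))).
  by apply: leq_sum => j _; apply: Hab; rewrite /in_shape !ltn_ord.
by rewrite -big_distrr /= sum_ord_indicator; case: (i == a :> nat); case: (b < _).
Qed.

Lemma sum_count_mem (s : seq nat) m : all (fun x => 0 < x <= m) s ->
  size s <= \sum_(v <- iota 1 m) count_mem v s.
Proof.
elim: s => [|x s IH] //= /andP [Hx /IH Hs].
rewrite big_split /= -add1n leq_add //.
have Hxm : x \in iota 1 m by rewrite mem_iota; lia.
by rewrite (big_rem x Hxm) /= eqxx.
Qed.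

Lemma n_entries_le_values F m :
  (forall i j, in_shape F i j -> all (fun x => 0 < x <= m) (cell F i j)) ->
  n_entries F <= \sum_(v <- iota 1 m) count_val F v.
Proof.
move=> Hrange; rewrite /n_entries /count_val exchange_big /=.
apply: leq_sum => i _; rewrite exchange_big /=; apply: leq_sum => j _.
by apply: sum_count_mem; apply: Hrange; rewrite /in_shape !ltn_ord.
Qed.

Lemma n_cells_le_entries F : (forall i j, in_shape F i j -> cell F i j != [::]) ->
  n_cells F <= n_entries F.
Proof.
move=> Hne; rewrite /n_cells /n_entries /Defs.shape.
rewrite sumnE big_map (big_nth [::]) big_mkord; apply: leq_sum => i _.
rewrite -[X in X <= _]card_ord -sum1_card; apply: leq_sum => j _.
by rewrite lt0n size_eq0; apply: Hne; rewrite /in_shape !ltn_ord.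
Qed.

(* Rows decrease to the right and columns downwards, so in an SBCSPP every
   entry is bounded by the largest entry of the corner cell (0,0). *)
Lemma sbc_entry_le_corner n F i j y : is_SBC n F -> in_shape F i j ->
  y \in cell F i j -> y <= \max_(x <- cell F 0 0) x.
Proof.
move=> [[HP _] Hcell _ Hrow Hcol]; elim: i j y => [|i IH] j y.
- elim: j y => [|j IHj] y Hs Hy; first exact: (leq_bigmax_seq (P := xpredT)).
  have Hprev : \max_(z <- cell F 0 j) z <= \max_(x <- cell F 0 0) x.
    by apply/bigmax_leqP_seq => z Hz _; apply: IHj Hz; apply: (in_shape_mono HP Hs).
  have Hy' : y <= \max_(z <- cell F 0 j.+1) z by apply: (leq_bigmax_seq (P := xpredT)).
  by have := Hrow 0 j Hs; lia.
- move=> Hs Hy; have Hs' : in_shape F i j by apply: (in_shape_mono HP Hs).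
  have [Hne _ _] := Hcell i j Hs'.
  have [z Hz] : exists z, z \in cell F i j.
    by case: (cell F i j) Hne => [|z s] // _; exists z; rewrite mem_head.
  by have := Hcol i j z y Hs Hz Hy; have := IH j z Hs' Hz; lia.
Qed.

Section DPP.
Variables (n : nat) (F : SBC).
Hypothesis HD : is_DPP n F.

Lemma dpp_sbc : is_SBC n F.
Proof. by case: HD. Qed.

Lemma dpp_partition : is_partition (Defs.shape F).
Proof. by case: dpp_sbc => [[]]. Qed.

(* All cells are singletons and a_k = b_k + 1, so the weight has no w. *)
Lemma dpp_w_exp : exp_w (sbc_weight n F) = 0%R.
Proof.
case: HD => _ Hsing Hab _ _ /=.
have -> : n_entries F = n_cells F.
  rewrite /n_cells /n_entries /Defs.shape sumnE big_map (big_nth [::]) big_mkord.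
  apply: eq_bigr => i _; rewrite -[RHS]card_ord -sum1_card; apply: eq_bigr => j _.
  by apply: Hsing; rewrite /in_shape !ltn_ord.
rewrite /W_exp (eq_bigr (fun _ => (-1)%R)); last by move=> k _; rewrite Hab ?ltn_ord //; lia.
by rewrite sumr_const card_ord addrK mulNrn natz subrr.
Qed.

Lemma dpp_first_column t : t < size F -> cell F t 0 = [:: size F - t].
Proof.
move=> Ht; have HP := dpp_partition; have [_ _ _ Hcolk _] := HD.
have H00 : in_shape F 0 0 by rewrite in_shape_col0 //; lia.
have [d Hd] := Hcolk 0 (durfee_gt HP H00).
have Hsize : size F = d.
  have := (Hd (size F)).1; have := (Hd d).1; rewrite !in_shape_col0 //; lia.
by rewrite Hsize; apply: (Hd t).2; rewrite -Hsize.
Qed.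

(* Outside the first column, a 1 can only sit on or below the diagonal, hence
   a second 1 requires the cell (1,1). *)
Lemma dpp_one_twice : count_val F 1 = 2 -> in_shape F 1 1.
Proof.
move=> Hc1; have HP := dpp_partition; have [_ _ _ _ Hno1] := HD.
apply/negPn/negP => H11.
have : count_val F 1 <= 1; last by lia.
apply: (count_val_le1 (a := (size F).-1) (b := 0)) => i [|j] Hs.
- move: (Hs); rewrite in_shape_col0 // => Hi; rewrite dpp_first_column //=.
  by case: (size F - i =P 1); case: (i =P (size F).-1); lia.
- case: (leqP j.+1 i) => Hji.
  + by case/negP: H11; apply: (in_shape_mono HP Hs); lia.
  + by move/count_memPn: (Hno1 _ _ Hs Hji) => ->.
Qed.

(* With the cell (1,1), a_0 = b_0 + 1 gives the first row d + 1 cells,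
   a_1 = b_1 + 1 gives the second row a cell (1,2), whose entry is at least 2
   and at most the entry of (1,1); so column 1 reaches row 2. *)
Lemma dpp_cell11_shape : in_shape F 1 1 ->
  [/\ size (nth [::] F 0) = (size F).+1, 2 < size (nth [::] F 1) & in_shape F 2 1].
Proof.
move=> H11; have HP := dpp_partition.
have [[_ Hcell _ Hrow _] _ Hab Hcolk Hno1] := HD.
have Hdur1 : 1 < durfee (Defs.shape F) by apply: durfee_gt.
move: (H11) => /andP [Hs1 _].
have Ha0 := Hab 0 ltac:(lia); have Ha1 := Hab 1 Hdur1.
rewrite /frob_a /frob_b conjpart0 // nth_shape // in Ha0; last by lia.
rewrite /frob_a /frob_b nth_shape // in Ha1.
have H12 : in_shape F 1 2 by rewrite /in_shape Hs1 /=; lia.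
have [d2 Hd2] := Hcolk 1 Hdur1.
have Hc11 : cell F 1 1 = [:: d2].
  have Hd2pos : 0 < d2 by apply/(Hd2 0).1; rewrite addn0.
  by have := (Hd2 0).2 Hd2pos; rewrite addn0 subn0.
have [Hne _ Hall] := Hcell 1 2 H12.
have [x Hx] : exists x, x \in cell F 1 2.
  by case: (cell F 1 2) Hne => [|y s] // _; exists y; rewrite mem_head.
have Hx2 : 1 < x.
  move/allP: Hall => /(_ x Hx) /andP [Hx0 _]; case: (x =P 1) => [Hx1|]; last by lia.
  by move: Hx; rewrite Hx1 (negbTE (Hno1 1 2 H12 isT)).
have Hxd2 : x <= d2.
  have Hmax := Hrow 1 1 H12; rewrite Hc11 big_seq1 in Hmax.
  by apply: leq_trans Hmax; apply: (leq_bigmax_seq (P := xpredT)).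
split; [lia | by case/andP: H12 | by have [_ ->] := (Hd2 1).1; lia].
Qed.

(* Counting cells against entries: at least 2d + 3 cells, at most 2d + 2 entries. *)
Lemma dpp_not_star_profile : 3 <= n -> ~ star_profile n (fun v => ((count_val F v)%:Z)%R).
Proof.
move=> Hn [Hc1 Hc2 Hcv]; have HP := dpp_partition; have [_ Hcell _ _ _] := dpp_sbc.
have Hpos : 0 < size F.
  by case: posnP => // HF0; move: Hc2; rewrite /count_val HF0 big_ord0.
have Hc1' : count_val F 1 = 2.
  have := @count_val_ge F 1 (size F).-1 0; rewrite in_shape_col0 ?dpp_first_column //; last by lia.
  by rewrite (_ : size F - (size F).-1 = 1) /=; lia.
have [Hrow0 Hrow1 H21] := dpp_cell11_shape (dpp_one_twice Hc1').
have Hd3 : 3 <= size F by move: H21 => /andP []; lia.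
have H00 : in_shape F 0 0 by rewrite in_shape_col0.
have Hcorner : \max_(x <- cell F 0 0) x = size F by rewrite dpp_first_column // subn0 big_seq1.
have Hdn : size F <= n.
  by have [_ _] := Hcell 0 0 H00; rewrite dpp_first_column // subn0 /= andbT => /andP [].
have Hrange i j : in_shape F i j -> all (fun x => 0 < x <= size F) (cell F i j).
  move=> Hs; have [_ _ /allP Hall] := Hcell i j Hs; apply/allP => x Hx.
  by have := Hall x Hx; have := sbc_entry_le_corner dpp_sbc Hs Hx; rewrite Hcorner; lia.
have Hvalues : \sum_(v <- iota 1 (size F)) count_val F v <= 2 * size F + 2.
  have Htail : \sum_(v <- iota (1 + 3) (size F - 3)) count_val F v <= 2 * (size F - 3).
    rewrite -[X in _ <= _ * X](size_iota (1 + 3)); apply: sum_le_const => v; rewrite mem_iota => Hv.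
    by have := Hcv v ltac:(lia); case: (v =P 2); case: (v =P 3); lia.
  rewrite -(subnKC Hd3) iotaD big_cat /= !big_cons big_nil.
  by have := Hcv 1; have := Hcv 2; have := Hcv 3; rewrite /=; lia.
have := n_cells_ge HP Hd3; have := n_entries_le_values Hrange.
have := n_cells_le_entries (fun i j Hs => let: And3 Hne _ _ := Hcell i j Hs in Hne).
by move: H21 => /andP [_]; lia.
Qed.

End DPP.

Lemma weight_X_exp n F T : sbc_weight n F = amt_weight n T ->
  forall v, 0 < v <= n -> ((count_val F v)%:Z)%R = amt_expX T v.
Proof.
move=> /(congr1 exp_X) /= HX v Hv.
have := congr1 (fun s => nth 0%R s v.-1) HX.
by rewrite /= !(nth_map 0) ?size_iota ?nth_iota ?add1n ?prednK //; lia.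
Qed.

Lemma star_profile_eq n (e e' : nat -> int) : 2 <= n ->
  (forall v, 0 < v <= n -> e v = e' v) -> star_profile n e -> star_profile n e'.
Proof.
move=> Hn He [H1 H2 H3]; split.
- rewrite -He; [exact: H1 | lia].
- rewrite -He; [exact: H2 | lia].
- by move=> v Hv; rewrite -He //; apply: H3.
Qed.

Theorem mainTheorem5 (n : nat) : 3 <= n ->
  ~ exists Phi : AMT -> SBC,
      [/\ bij_on (is_AMT n) (is_SBC n) Phi,
          (forall T, is_AMT n T -> sbc_weight n (Phi T) = amt_weight n T)
        & exists Psi : SBC -> AMT,
            (* Psi is the inverse Phi^{-1} on the SBCSPPs *)
            (forall D, is_SBC n D -> is_AMT n (Psi D) /\ Phi (Psi D) = D) /\
            bij_on (is_DPP n) (is_MT n) (fun D => forget (Psi D))].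
Proof.
move=> Hn [Phi [_ Hweight [Psi [HPsi [_ _ onto_MT]]]]].
have [D [HD Hforget]] := onto_MT (star_MT n) (is_MT_star Hn).
have [HT HPhiD] := HPsi D (dpp_sbc HD).
have Hw := Hweight _ HT; rewrite HPhiD in Hw.
have Hboth : count_arrow isBoth (Psi D) = 0.
  by have := congr1 exp_w Hw; rewrite dpp_w_exp //=; lia.
apply: (dpp_not_star_profile HD Hn).
apply: (star_profile_eq _ _ (amt_star_profile Hn HT Hforget Hboth)); first by lia.
by move=> v Hv; rewrite (weight_X_exp Hw).
Qed.
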